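(* Let $P$ be a priority forest in $\Pi(n)$. If $P$ is a tree, then $\mu(P,\hat1)=-1$. Otherwise $P=T_0\,T_1\cdots T_\ell$ with $\ell\ge1$, and $$\mu(P,\hat1)=(-1)^{\operatorname{corank}P}\prod_{k=0}^{\ell-1}e(T_k),$$ where $e(T)$ denotes the number of edges of $T$.
   Context: $[n]_0=\{0,\dots,n\}$. A priority forest on $[n]_0$ is a rooted forest with vertex set $[n]_0$ whose component trees $T_0,T_1,\dots,T_\ell$ (listed in this order) are increasing (each non-root vertex has a larger label than its parent) and satisfy: for $j<k$ every label of $T_j$ is smaller than every label of $T_k$. The priority lattice $\Pi(n)$ is the set of priority forests on $[n]_0$ ordered by inclusion of edge sets, together with an extra element $\hat1$ greater than all of them; $\mu$ denotes its Möbius function. Its rank function is $\rho(P)=|E(P)|$ and $\rho(\hat1)=n+1$; the corank of a priority forest $P$ is $n+1-\rho(P)$, which equals its number of component trees. *)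

From mathcomp Require Import all_boot all_order all_algebra.
Set Implicit Arguments. Unset Strict Implicit. Unset Printing Implicit Defensive.
Import GRing.Theory Num.Theory.

(* Computed by structural recursion with fuel; #|T| fuel suffices since any
   strict chain x < z1 < ... < y has at most #|T| elements. *)
Fixpoint mobius_fuel (T : finType) (le : rel T) (k : nat) (x y : T) : int :=
  match k with
  | 0 => 0%R
  | k'.+1 =>
      if x == y then 1%R
      else if le x y then
        (- \sum_(z : T | le x z && le z y && (z != y)) mobius_fuel le k' x z)%R
      else 0%R
  end.

Definition mobius (T : finType) (le : rel T) (x y : T) : int :=
  mobius_fuel le #|T| x y.

(* A rooted forest on 'I_n.+1 given by its parent function
   (None = the vertex is a root). *)
Definition forest (n : nat) := {ffun 'I_n.+1 -> option 'I_n.+1}.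

Definition edges n (p : forest n) : {set 'I_n.+1 * 'I_n.+1} :=
  [set e | p e.2 == Some e.1].

Definition increasing n (p : forest n) : bool :=
  [forall i, if p i is Some j then j < i else true].

(* root of the tree containing u (parents strictly decrease, so n steps suffice) *)
Definition proot n (p : forest n) (u : 'I_n.+1) : 'I_n.+1 :=
  iter n (fun x => odflt x (p x)) u.

(* the component trees can be listed so that for j < k every label of T_j is
   smaller than every label of T_k: any two distinct trees are label-separated *)
Definition priority_cond n (p : forest n) : bool :=
  [forall u, forall v, (proot p u != proot p v) ==>
     ([forall x, forall y,
         ((proot p x == proot p u) && (proot p y == proot p v)) ==> (x < y)]
      || [forall x, forall y,
         ((proot p x == proot p u) && (proot p y == proot p v)) ==> (y < x)])].

Definition priority_forest n (p : forest n) : bool :=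
  increasing p && priority_cond p.

Definition prio (n : nat) := {p : forest n | priority_forest p}.

(* Some P = priority forest P, None = \hat 1 *)
Definition Pi (n : nat) := option (prio n).

Definition Pi_le n : rel (Pi n) := fun x y =>
  match x, y with
  | _, None => true
  | None, Some _ => false
  | Some a, Some b => edges (val a) \subset edges (val b)
  end.

Definition mu n (x y : Pi n) : int := mobius (@Pi_le n) x y.

(* tree_roots of the component trees, in increasing order: T_0, ..., T_l
   (each tree's root is its least label, trees are label-separated) *)
Definition tree_roots n (p : forest n) : seq 'I_n.+1 :=
  [seq r <- enum 'I_n.+1 | p r == None].

Definition tree_edges n (p : forest n) (r : 'I_n.+1) : nat :=
  #|[set e in edges p | proot p e.2 == r]|.

Definition corank n (p : forest n) : nat := n.+1 - #|edges p|.

(* Write w(Q) = (-1)^(l+1) * prod_k (r_(k+1) - r_k - 1) for a priority forest Q with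
   roots r_0 < ... < r_l; the gap r_(k+1) - r_k - 1 is the number of edges of T_k, whose
   vertex set is [r_k, r_(k+1)).  The dual Moebius recursion
   sum_(P <= Q <= 1) mu(Q, 1) = 0, used by induction downwards from 1, reduces
   mu(P, 1) = w(P) to the identity sum_(Q >= P) w(Q) = -1.  For a tree P the only
   extension is P itself.  Otherwise let r be the last root of P and group the extensions
   Q of P by the forest q obtained from Q by deleting the edge into r.  If a is the last
   root of q before r and w' the weight of q with the root r removed, the group consists
   of q, of weight -(r - a - 1) w', and of the r - a forests attaching r to some v in
   [a, r), each of weight w'.  So every group contributes w', as does the corresponding
   group of extensions of P with r attached to r - 1, a forest with one root fewer. *)

From mathcomp Require Import all_boot all_order all_algebra.
From mathcomp Require Import zify ring.
Import GRing.Theory Num.Theory.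
Set Implicit Arguments. Unset Strict Implicit. Unset Printing Implicit Defensive.
Local Open Scope ring_scope.

Section Mobius.
Variables (T : finType) (le : rel T).
Hypothesis le_refl : reflexive le.
Hypothesis le_anti : antisymmetric le.
Hypothesis le_trans : transitive le.

Definition segment x y := [pred z | le x z && le z y].

Lemma card_segment_lt x y z : le x z -> le z y -> z != y -> (#|segment x z| < #|segment x y|)%N.
Proof.
move=> xz zy nzy; apply: proper_card; apply/properP; split.
  by apply/subsetP => w; rewrite !inE /= => /andP[-> wz]; rewrite (le_trans wz zy).
exists y; first by rewrite inE /= (le_trans xz zy) le_refl.
by rewrite inE /= andbC; apply: contra nzy => /andP[yz _]; apply/eqP/le_anti; rewrite zy yz.
Qed.

Lemma mobius_fuel_stable k m x y : (#|segment x y| <= k)%N ->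
  mobius_fuel le (k + m) x y = mobius_fuel le k x y.
Proof.
elim: k x y => [|k IH] x y.
  rewrite leqn0 => /eqP/card0_eq/(_ x); rewrite inE /= le_refl /= => nxy.
  by case: m => //= m; rewrite nxy; case: eqP => // exy; rewrite exy le_refl in nxy.
move=> hk; rewrite addSn /=; case: eqP => // _; case: ifP => // xy.
congr (- _); apply: eq_bigr => z /andP[/andP[xz zy] nzy].
by apply: IH; rewrite -ltnS (leq_trans (card_segment_lt xz zy nzy)).
Qed.

Lemma mobius_fuelE k x y : (#|segment x y| <= k)%N -> mobius_fuel le k x y = mobius le x y.
Proof.
move=> hk; rewrite /mobius -(subnKC (max_card (mem (segment x y)))).
by rewrite mobius_fuel_stable // -(subnKC hk) mobius_fuel_stable.
Qed.

Lemma mobius_refl x : mobius le x x = 1.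
Proof.
rewrite /mobius; have : (0 < #|T|)%N by apply/card_gt0P; exists x.
by case: #|T| => //= k _; rewrite eqxx.
Qed.

Lemma mobius_eq0 x y : ~~ le x y -> mobius le x y = 0.
Proof.
move=> nxy; rewrite /mobius; have : (0 < #|T|)%N by apply/card_gt0P; exists x.
case: #|T| => //= k _; rewrite (negbTE nxy); case: eqP => // exy.
by rewrite exy le_refl in nxy.
Qed.

Lemma mobius_rec x y : le x y -> x != y ->
  mobius le x y = - \sum_(z | le x z && le z y && (z != y)) mobius le x z.
Proof.
move=> xy nxy; have : (0 < #|T|)%N by apply/card_gt0P; exists x.
rewrite {1}/mobius; case hT: #|T| => [|k] //= _.
rewrite (negbTE nxy) xy; congr (- _); apply: eq_bigr => z /andP[/andP[xz zy] nzy].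
by apply: mobius_fuelE; rewrite -ltnS -hT (leq_trans (card_segment_lt xz zy nzy)) ?max_card.
Qed.

Lemma mobius_mul_zeta x y : \sum_z mobius le x z * (le z y)%:R = (x == y)%:R.
Proof.
rewrite (bigID (fun z => le x z)) /= [X in _ + X]big1 => [|z nxz]; last first.
  by rewrite mobius_eq0 ?mul0r.
rewrite addr0 (bigID (fun z => le z y)) /= [X in _ + X]big1 => [|z /andP[_ /negbTE->]];
  last by rewrite mulr0.
rewrite addr0; under eq_bigr => z /andP[_ ->] do rewrite mulr1.
have [<-|nxy] := eqVneq x y.
  rewrite (big_pred1 x) ?mobius_refl // => z /=.
  by apply/andP/eqP => [[xz zx]|->]; [apply: le_anti; rewrite zx | rewrite le_refl].
have [xy|nle] := boolP (le x y); last first.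
  by rewrite big_pred0 // => z; apply: contraNF nle => /andP[]; apply: le_trans.
by rewrite (bigD1 y) /= ?xy ?le_refl // mobius_rec // addrC subrr.
Qed.

Definition kernel_mx (f : T -> T -> int) : 'M[int]_#|T| :=
  \matrix_(i, j) f (enum_val i) (enum_val j).

Lemma mul_kernel_mx f g :
  kernel_mx f *m kernel_mx g = kernel_mx (fun x y => \sum_z f x z * g z y).
Proof.
apply/matrixP => i j; rewrite !mxE [RHS](big_enum_val (A := predT)) /=.
by apply: eq_bigr => k _; rewrite !mxE.
Qed.

(* A one-sided inverse of a square matrix over a commutative ring is two-sided, so
   [mobius_mul_zeta] yields the dual recursion. *)
Lemma zeta_mul_mobius x y : \sum_z (le x z)%:R * mobius le z y = (x == y)%:R.
Proof.
have /mulmx1C : kernel_mx (mobius le) *m kernel_mx (fun x y => (le x y)%:R) = 1%:M.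
  by apply/matrixP => i j; rewrite mul_kernel_mx !mxE mobius_mul_zeta (inj_eq enum_val_inj).
rewrite mul_kernel_mx => /matrixP /(_ (enum_rank x) (enum_rank y)).
by rewrite !mxE !enum_rankK (inj_eq enum_rank_inj).
Qed.

Lemma sum_mobius_segment x y : le x y -> x != y ->
  \sum_(z | le x z && le z y) mobius le z y = 0.
Proof.
move=> xy nxy; have := zeta_mul_mobius x y.
rewrite (negbTE nxy) mulr0n (bigID (fun z => le x z && le z y)) /=.
rewrite [X in _ + X]big1 => [|z]; last first.
  by case: (le x z) => /= nzy; rewrite ?mul0r // mobius_eq0 ?mulr0.
by rewrite addr0 => h; apply: etrans h; apply: eq_bigr => z /andP[-> _]; rewrite mul1r.
Qed.

End Mobius.

Lemma big_option (T : finType) (R : nmodType) (A : pred (option T)) (F : option T -> R) :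
  \sum_(o | A o) F o = (if A None then F None else 0) + \sum_(x | A (Some x)) F (Some x).
Proof.
rewrite big_mkcond (bigD1 None) //=; congr (_ + _).
rewrite (reindex_omap Some id) => [|[]//].
by rewrite [RHS]big_mkcond; apply: eq_bigl => x /=; rewrite eqxx.
Qed.

Section FfunUpdate.
Variables (I : finType) (J : Type).
Implicit Types (f : {ffun I -> J}) (i : I) (j : J).

Definition ffun_upd f i j : {ffun I -> J} := [ffun x => if x == i then j else f x].

Lemma ffun_updE f i j x : ffun_upd f i j x = if x == i then j else f x.
Proof. by rewrite ffunE. Qed.

Lemma ffun_upd_id f i : ffun_upd f i (f i) = f.
Proof. by apply/ffunP => x; rewrite ffun_updE; case: eqP => [->|]. Qed.

Lemma ffun_upd_upd f i j j' : ffun_upd (ffun_upd f i j) i j' = ffun_upd f i j'.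
Proof. by apply/ffunP => x; rewrite !ffun_updE; case: eqP. Qed.

End FfunUpdate.

Lemma sum_ffun_upd (I J : finType) (R : nmodType) (i : I) (j0 : J)
    (A : pred {ffun I -> J}) (F : {ffun I -> J} -> R) :
  \sum_(f | A f) F f =
  \sum_(g : {ffun I -> J} | g i == j0) \sum_(j | A (ffun_upd g i j)) F (ffun_upd g i j).
Proof.
rewrite (partition_big (fun f => ffun_upd f i j0) (fun g : {ffun I -> J} => g i == j0)).
  2: by move=> f _; rewrite ffun_updE eqxx.
apply: eq_bigr => g /eqP gi.
rewrite (reindex_onto (ffun_upd g i) (fun f => f i)) => [|f /andP[_ /eqP <-]]; last first.
  by rewrite -gi ffun_upd_upd ffun_upd_id.
apply: eq_bigl => j; rewrite ffun_upd_upd -gi ffun_upd_id eqxx ffun_updE eqxx eqxx.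
by rewrite !andbT.
Qed.

Lemma card_ord_itv m a b : (b <= m)%N -> #|[pred v : 'I_m | a <= v < b]%N| = (b - a)%N.
Proof.
move=> bm; rewrite -sum1_card (eq_bigl (fun v : 'I_m => a <= v < b)%N) //.
rewrite -(big_mkord (fun v => a <= v < b)%N (fun _ => 1%N)) -(big_nat_widen _ _ _ (leq a) _ bm).
by rewrite -(big_nat_widenl _ _ _ predT) // sum_nat_const_nat muln1.
Qed.

Section Forests.
Variable n : nat.
Local Notation I := 'I_n.+1.
Implicit Types (p q : forest n) (u v c j r x : I).
Local Notation ltI := (fun x y : I => (x < y)%N).

Lemma increasingP p : reflect (forall c j, p c = Some j -> (j < c)%N) (increasing p).
Proof.
apply: (iffP forallP) => [inc c j pc|inc c]; first by have := inc c; rewrite pc.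
by case pc: (p c) => [j|] //; apply: inc.
Qed.

Lemma increasing_root0 p : increasing p -> p ord0 = None.
Proof. by move=> /increasingP inc; case p0: (p ord0) => [j|] //; have := inc _ _ p0. Qed.

Lemma priority_forest_increasing p : priority_forest p -> increasing p.
Proof. by case/andP. Qed.

Definition parent_step p x := odflt x (p x).

Lemma proot_id p u : p u = None -> proot p u = u.
Proof.
move=> pu; have iter_id k : iter k (parent_step p) u = u.
  by elim: k => //= k ->; rewrite /parent_step pu.
exact: iter_id.
Qed.

Lemma proot_le p u : increasing p -> (proot p u <= u)%N.
Proof.
move=> /increasingP inc; have iter_le k : (iter k (parent_step p) u <= u)%N.
  elim: k => //= k IH; rewrite /parent_step.
  by case pk: (p _) => [j|] //=; rewrite (leq_trans (ltnW (inc _ _ pk))).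
exact: iter_le.
Qed.

Lemma proot_root p u : increasing p -> p (proot p u) = None.
Proof.
move=> inc; have descend k :
    p (iter k (parent_step p) u) = None \/ (iter k (parent_step p) u + k <= u)%N.
  elim: k => [|k IH] /=; first by right; rewrite addn0.
  set w := iter k _ u in IH *; rewrite /parent_step; case pk: (p w) => [j|] /=; last by left.
  right; case: IH => [|IH]; first by rewrite pk.
  by rewrite addnS (leq_trans _ IH) // ltn_add2r (increasingP _ inc _ _ pk).
case: (descend n) => // un.
suff -> : proot p u = ord0 by rewrite increasing_root0.
have {}un : (proot p u + n <= u)%N := un.
by apply: val_inj; have := ltn_ord u; rewrite /=; lia.
Qed.

Lemma proot_parent p c j : increasing p -> p c = Some j -> proot p c = proot p j.
Proof.
move=> inc pc; have -> : j = odflt c (p c) by rewrite pc.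
by rewrite {2}/proot -iterSr iterS -/(proot p c) /= proot_root.
Qed.

Definition spans_no_root p : bool :=
  [forall c, forall r, if p c is Some j then (p r == None) ==> ~~ (j < r <= c)%N else true].

Lemma spans_no_rootP p :
  reflect (forall c j r, p c = Some j -> p r = None -> ~~ (j < r <= c)%N) (spans_no_root p).
Proof.
apply: (iffP forallP) => [h c j r pc pr|h c].
  by have /forallP/(_ r) := h c; rewrite pc pr.
by apply/forallP => r; case pc: (p c) => [j|] //; apply/implyP => /eqP /(h _ _ _ pc).
Qed.

Lemma proot_lt_root p u r : increasing p -> spans_no_root p -> p r = None ->
  (proot p u < r)%N -> (u < r)%N.
Proof.
move=> inc /spans_no_rootP span pr.
have [m] := ubnP (nat_of_ord u); elim: m u => // m IH u; rewrite ltnS => um.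
case pu: (p u) => [j|]; last by rewrite proot_id.
have jm := leq_trans (increasingP _ inc _ _ pu) um.
rewrite (proot_parent inc pu) => /(IH _ jm) jr.
by have := span _ _ _ pu pr; rewrite jr /= -ltnNge.
Qed.

Lemma ltn_proot p x y : increasing p -> spans_no_root p ->
  (proot p x < proot p y)%N -> (x < y)%N.
Proof.
move=> inc span /(proot_lt_root inc span (proot_root y inc)) xy.
exact: leq_trans xy (proot_le y inc).
Qed.

Lemma priority_forestE p : priority_forest p = increasing p && spans_no_root p.
Proof.
rewrite /priority_forest; case inc: (increasing p) => //=.
apply/forallP/spans_no_rootP => [sep c j r pc pr|span u].
  apply/negP => /andP[jr rc].
  have cr : (proot p c < r)%N.
    by rewrite (proot_parent inc pc) (leq_ltn_trans (proot_le _ inc)).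
  have ncr : proot p c != r by rewrite -val_eqE /= neq_ltn cr.
  have /forallP/(_ r)/implyP := sep c; rewrite (proot_id pr) => /(_ ncr).
  case/orP => [/forallP/(_ c)/forallP/(_ r)|/forallP/(_ j)/forallP/(_ r)].
    by rewrite eqxx proot_id // eqxx /= ltnNge rc.
  by rewrite (proot_parent inc pc) eqxx proot_id // eqxx /= ltnNge (ltnW jr).
have span' : spans_no_root p by apply/spans_no_rootP.
apply/forallP => v; apply/implyP => nuv.
have [uv|vu|/val_inj uv] := ltngtP (proot p u) (proot p v); last by rewrite uv eqxx in nuv.
  apply/orP; left; apply/forallP => x; apply/forallP => y.
  by apply/implyP => /andP[/eqP xu /eqP yv]; apply: (ltn_proot inc span'); rewrite ?xu ?yv.
apply/orP; right; apply/forallP => x; apply/forallP => y.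
by apply/implyP => /andP[/eqP xu /eqP yv]; apply: (ltn_proot inc span'); rewrite ?xu ?yv.
Qed.

Lemma edges_subsetP p q :
  reflect (forall c j, p c = Some j -> q c = Some j) (edges p \subset edges q).
Proof.
apply: (iffP subsetP) => [sub c j pc|sub [j c]]; last by rewrite !inE /= => /eqP /sub ->.
by have := sub (j, c); rewrite !inE /= pc eqxx => /(_ isT) /eqP.
Qed.

Lemma edges_subset_root p q c : edges p \subset edges q -> q c = None -> p c = None.
Proof. by move=> /edges_subsetP sub qc; case pc: (p c) => [j|] //; rewrite (sub _ _ pc) in qc. Qed.

Lemma edges_inj : injective (@edges n).
Proof.
move=> p q epq; apply/ffunP => c.
have /edges_subsetP pq : edges p \subset edges q by rewrite epq.
have /edges_subsetP qp : edges q \subset edges p by rewrite epq.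
case pc: (p c) => [j|]; first by rewrite (pq _ _ pc).
by case qc: (q c) => [j|] //; rewrite (qp _ _ qc) in pc.
Qed.

Lemma edges_subset_upd p q r o : p r = None ->
  (edges p \subset edges (ffun_upd q r o)) = (edges p \subset edges q).
Proof.
move=> pr; apply/edges_subsetP/edges_subsetP => sub c j pc; have := sub c j pc;
  by rewrite ?ffun_updE; case: eqP => // cr; rewrite cr pr in pc.
Qed.

Lemma upd_edges_subset p q r v : p r = None ->
  (edges (ffun_upd p r (Some v)) \subset edges q) = (edges p \subset edges q) && (q r == Some v).
Proof.
move=> pr; apply/edges_subsetP/andP => [sub|[/edges_subsetP sub /eqP qr] c j].
  split; last by rewrite (sub r v) ?ffun_updE ?eqxx.
  apply/edges_subsetP => c j pc; apply: sub.
  by rewrite ffun_updE; case: eqP => // cr; rewrite cr pr in pc.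
by rewrite ffun_updE; case: eqP => [-> [<-]|_ /sub].
Qed.

Lemma mem_tree_roots p x : (x \in tree_roots p) = (p x == None).
Proof. by rewrite mem_filter mem_enum andbT. Qed.

Lemma sorted_tree_roots p : sorted ltI (tree_roots p).
Proof.
apply: sorted_filter => [x y z|]; first exact: ltn_trans.
by have := iota_ltn_sorted 0 n.+1; rewrite -val_enum_ord sorted_map.
Qed.

Lemma card_edges_to p (A : pred I) :
  #|[set e in edges p | A e.2]| = #|[pred c | (p c != None) && A c]|.
Proof.
rewrite -(card_in_imset (f := snd)) => [|[j c] [j' c']]; last first.
  rewrite !inE /= => /andP[/eqP pc _] /andP[/eqP pc' _] /= cc'.
  by rewrite -cc' pc in pc' *; case: pc' => ->.
apply: eq_card => c; rewrite inE; apply/imsetP/andP => [[[j c'] + ->]|[]].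
  by rewrite !inE /= => /andP[/eqP -> ->].
by case pc: (p c) => [j|] // _ Ac; exists (j, c); rewrite // !inE /= pc eqxx.
Qed.

Lemma size_tree_roots p : size (tree_roots p) = #|[pred c | p c == None]|.
Proof. by rewrite cardE /tree_roots enumT /enum_mem size_filter. Qed.

Lemma size_tree_roots_lt p q : edges p \subset edges q -> p != q ->
  (size (tree_roots q) < size (tree_roots p))%N.
Proof.
move=> pq npq; rewrite !size_tree_roots; apply: proper_card; apply/properP; split.
  by apply/subsetP => c; rewrite !inE => /eqP /(edges_subset_root pq) ->.
case: (pickP [pred c | (p c == None) && (q c != None)]) => [c /andP[pc qc]|no_c].
  by exists c; rewrite !inE.
case/negP: npq; apply/eqP/ffunP => c; case pc: (p c) => [j|].
  by move/edges_subsetP: pq => /(_ _ _ pc) ->.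
by have := no_c c; rewrite /= pc eqxx /= => /negbFE /eqP.
Qed.

Lemma ord0_in_tree_roots p : increasing p -> ord0 \in tree_roots p.
Proof. by move=> inc; rewrite mem_tree_roots increasing_root0. Qed.

Lemma corank_tree_roots p : corank p = size (tree_roots p).
Proof.
have all_edges : [set e in edges p | predT e.2] = edges p.
  by apply/setP => e; rewrite !inE andbT.
rewrite /corank; have := card_edges_to p predT; rewrite all_edges => ->.
have -> : #|[pred c | (p c != None) && predT c]| = #|[predC [pred c | p c == None]]|.
  by apply: eq_card => c; rewrite !inE andbT.
have := cardC [pred c | p c == None]; rewrite card_ord size_tree_roots => card_sum.
by rewrite -[X in (X - _)%N]card_sum addnK.
Qed.

Lemma sorted_leq_nth_ord (s : seq I) : sorted ltI s ->
  {in [pred i | i < size s]%N &, {homo nth ord0 s : i j / (i <= j)%N >-> (i <= j)%N}}.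
Proof.
move=> srt; apply: (sorted_leq_nth (leT := fun x y : I => (x <= y)%N)) => //.
  by move=> ? ? ?; apply: leq_trans.
by apply: sub_sorted srt => x y /ltnW.
Qed.

Lemma sorted_nth_succ_le (s : seq I) k x : sorted ltI s -> (k.+1 < size s)%N ->
  x \in s -> (nth ord0 s k < x)%N -> (nth ord0 s k.+1 <= x)%N.
Proof.
move=> /sorted_leq_nth_ord leq_nth ks xs kx; rewrite -(nth_index ord0 xs) in kx *.
have ix : (index x s < size s)%N by rewrite index_mem.
have [ik|ki] := leqP (index x s) k; last exact: leq_nth.
by have := leq_nth _ _ ix (ltnW ks) ik; rewrite leqNgt kx.
Qed.

Lemma sorted_leq_last (s : seq I) x : sorted ltI s -> x \in s -> (x <= last ord0 s)%N.
Proof.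
move=> /sorted_leq_nth_ord leq_nth xs; rewrite -(nth_index ord0 xs) -nth_last.
have ix : (index x s < size s)%N by rewrite index_mem.
have s0 : (0 < size s)%N := leq_ltn_trans (leq0n _) ix.
by apply: leq_nth; rewrite ?inE ?prednK // -ltnS prednK.
Qed.

Lemma proot_nthE p k x : priority_forest p -> (k.+1 < size (tree_roots p))%N ->
  (proot p x == nth ord0 (tree_roots p) k) =
  (nth ord0 (tree_roots p) k <= x < nth ord0 (tree_roots p) k.+1)%N.
Proof.
rewrite priority_forestE => /andP[inc span] ks.
set c0 := nth _ _ k; set c1 := nth _ _ k.+1.
have root_nth i : (i < size (tree_roots p))%N -> p (nth ord0 (tree_roots p) i) = None.
  by move=> ik; apply/eqP; rewrite -mem_tree_roots mem_nth.
have c01 : (c0 < c1)%N.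
  by apply: (sorted_ltn_nth (fun _ _ _ => @ltn_trans _ _ _) ord0 (sorted_tree_roots p));
    rewrite ?inE // ltnW.
apply/eqP/andP => [xc0|[c0x xc1]].
  rewrite -xc0 proot_le //; split=> //.
  by apply: (proot_lt_root inc span (root_nth _ ks)); rewrite xc0.
have xr := proot_root x inc.
have [xc0|c0x'|/val_inj //] := ltngtP (proot p x) c0.
  by have := proot_lt_root inc span (root_nth _ (ltnW ks)) xc0; rewrite ltnNge c0x.
have := sorted_nth_succ_le (sorted_tree_roots p) ks _ c0x'; rewrite mem_tree_roots xr eqxx.
by move=> /(_ isT) /leq_trans /(_ (proot_le x inc)); rewrite leqNgt xc1.
Qed.

Lemma tree_edges_nth p k : priority_forest p -> (k.+1 < size (tree_roots p))%N ->
  tree_edges p (nth ord0 (tree_roots p) k) =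
  (nth ord0 (tree_roots p) k.+1 - nth ord0 (tree_roots p) k - 1)%N.
Proof.
move=> prio ks; rewrite /tree_edges (card_edges_to p (fun x => proot p x == _)).
set c0 := nth _ _ k; set c1 := nth _ _ k.+1.
have c0_root : p c0 = None by apply/eqP; rewrite -mem_tree_roots mem_nth // ltnW.
rewrite (eq_card (B := [pred v : I | c0.+1 <= v < c1]%N)) => [|x]; last first.
  rewrite !inE /= proot_nthE // -/c0 -/c1; have [->|xc0] := eqVneq x c0.
    by rewrite c0_root ltnn.
  have c0x_neq : (c0 : nat) != x by rewrite eq_sym; exact: xc0.
  rewrite [(c0 < x)%N]ltn_neqAle c0x_neq /=; apply/andb_idl => /andP[c0x xc1].
  apply/eqP => px; have := @sorted_nth_succ_le _ k x (sorted_tree_roots p) ks.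
  rewrite mem_tree_roots px [(c0 < x)%N]ltn_neqAle c0x_neq c0x => /(_ isT isT).
  by rewrite leqNgt xc1.
by rewrite (card_ord_itv _ (ltnW (ltn_ord c1))) subnS subn1.
Qed.

Definition gap_weight (s : seq I) : int :=
  (-1) ^+ size s * \prod_(k < (size s).-1) (nth ord0 s k.+1 - nth ord0 s k - 1)%N%:Z.

Lemma gap_weight_rcons x s r :
  gap_weight (rcons (x :: s) r) = - (r - last x s - 1)%N%:Z * gap_weight (x :: s).
Proof.
rewrite /gap_weight size_rcons /= big_ord_recr /= exprS -rcons_cons.
have -> : nth ord0 (rcons s r) (size s) = r by rewrite nth_rcons ltnn eqxx.
have -> : nth ord0 (rcons (x :: s) r) (size s) = last x s.
  by rewrite nth_rcons /= ltnS leqnn (nth_last ord0 (x :: s)).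
rewrite (eq_bigr (fun k : 'I_(size s) => (nth ord0 s k - nth ord0 (x :: s) k - 1)%N%:Z)).
  by ring.
by move=> k _; rewrite !nth_rcons /= ltn_ord ltnS ltnW.
Qed.

Lemma gap_weight_tree_roots p : priority_forest p ->
  gap_weight (tree_roots p) = (-1) ^+ corank p *
    \prod_(k < (size (tree_roots p)).-1) (tree_edges p (nth ord0 (tree_roots p) k))%:Z.
Proof.
move=> prio; rewrite /gap_weight corank_tree_roots; congr (_ * _).
by apply: eq_bigr => k _; rewrite tree_edges_nth // -ltn_predRL (ltn_ord k).
Qed.

End Forests.

Section LastRoot.
Variable n : nat.
Local Notation I := 'I_n.+1.
Variables (P : forest n) (r : I).
Hypotheses (P_prio : priority_forest P) (P_r : P r = None).
Hypotheses (P_roots_le : forall x, P x = None -> (x <= r)%N) (r_gt0 : (0 < r)%N).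

Lemma val_inord_pred : (inord r.-1 : I) = r.-1 :> nat.
Proof. by rewrite inordK // (leq_ltn_trans (leq_pred r)). Qed.

Lemma priority_attach_last : priority_forest (ffun_upd P r (Some (inord r.-1))).
Proof.
move: P_prio; rewrite !priority_forestE => /andP[/increasingP inc /spans_no_rootP span].
apply/andP; split.
  apply/increasingP => c j; rewrite ffun_updE; case: eqP => [-> [<-]|_]; last exact: inc.
  by rewrite val_inord_pred prednK.
apply/spans_no_rootP => c j x; rewrite !ffun_updE.
have [_|cr] := eqVneq c r; have [//|xr] := eqVneq x r; last exact: span.
case=> <- /P_roots_le; have : (x : nat) != r := xr.
rewrite val_inord_pred; lia.
Qed.

Lemma subforest_roots_le q x : edges P \subset edges q -> q x = None -> (x <= r)%N.
Proof. by move=> Pq /(edges_subset_root Pq) /P_roots_le. Qed.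

Lemma priority_detach q v : edges P \subset edges q -> q r = None ->
  priority_forest (ffun_upd q r (Some v)) -> priority_forest q.
Proof.
move=> Pq q_r; rewrite !priority_forestE => /andP[/increasingP inc /spans_no_rootP span].
apply/andP; split.
  apply/increasingP => c j qc; apply: (inc c); rewrite ffun_updE.
  by case: eqP => // cr; rewrite cr q_r in qc.
apply/spans_no_rootP => c j x qc qx.
have cr : c != r by apply/eqP => cr; rewrite cr q_r in qc.
have [xr|xr] := eqVneq x r.
  2: by apply: (span c); rewrite ffun_updE ?(negbTE cr) ?(negbTE xr).
rewrite xr; apply/negP => /andP[jr rc].
case Pc: (P c) => [j'|].
  move/edges_subsetP: Pq => /(_ _ _ Pc); rewrite qc => -[jj]; rewrite -jj in Pc.
  move: P_prio; rewrite priority_forestE => /andP[_ /spans_no_rootP /(_ _ _ _ Pc P_r)].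
  by rewrite jr rc.
have := P_roots_le Pc; have : (c : nat) != r := cr.
by move: rc; rewrite /=; lia.
Qed.

Section Fiber.
Variable q : forest n.
Hypotheses (q_prio : priority_forest q) (Pq : edges P \subset edges q) (q_r : q r = None).

Definition other_roots := [seq x <- tree_roots q | x != r].
Definition last_other_root := last ord0 other_roots.

Lemma mem_other_roots x : (x \in other_roots) = (x != r) && (q x == None).
Proof. by rewrite mem_filter mem_tree_roots. Qed.

Lemma other_roots_lt x : x \in other_roots -> (x < r)%N.
Proof.
rewrite mem_other_roots => /andP[xr /eqP /(subforest_roots_le Pq)].
by rewrite leq_eqVlt => /orP[/eqP/val_inj xr'|//]; rewrite xr' eqxx in xr.
Qed.

Lemma tree_roots_detached : tree_roots q = rcons other_roots r.
Proof.
have lt_trans : transitive (fun x y : I => (x < y)%N) by move=> ? ? ?; apply: ltn_trans.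
apply: (irr_sorted_eq lt_trans) => [x|||x]; first exact: ltnn.
- exact: sorted_tree_roots.
- rewrite sorted_pairwise // pairwise_rcons -sorted_pairwise //.
  rewrite (sorted_filter lt_trans _ (sorted_tree_roots q)) andbT.
  by apply/allP => x /other_roots_lt.
rewrite mem_rcons inE mem_other_roots mem_tree_roots.
by have [->|xr] := eqVneq x r; rewrite ?q_r ?eqxx.
Qed.

Lemma tree_roots_attached v : tree_roots (ffun_upd q r (Some v)) = other_roots.
Proof.
rewrite /other_roots /tree_roots -[RHS]filter_predI; apply: eq_filter => x /=.
by rewrite ffun_updE; case: (x == r).
Qed.

Lemma last_other_root_mem : last_other_root \in other_roots.
Proof.
have: ord0 \in other_roots.
  rewrite mem_other_roots increasing_root0 ?eqxx ?andbT ?priority_forest_increasing //.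
  by rewrite -val_eqE /= neq_ltn r_gt0.
by rewrite /last_other_root; case: other_roots => // x s _ /=; apply: mem_last.
Qed.

Lemma last_other_root_max x : x \in other_roots -> (x <= last_other_root)%N.
Proof.
apply: sorted_leq_last; apply: sorted_filter (sorted_tree_roots q).
by move=> ? ? ?; apply: ltn_trans.
Qed.

Lemma priority_attach v :
  priority_forest (ffun_upd q r (Some v)) = (last_other_root <= v < r)%N.
Proof.
have a_mem := last_other_root_mem; set a := last_other_root in a_mem *.
have [ar qa] : a != r /\ q a = None by move: a_mem; rewrite mem_other_roots => /andP[? /eqP].
move: q_prio; rewrite !priority_forestE => /andP[/increasingP inc /spans_no_rootP span].
apply/andP/andP => [[/increasingP inc' /spans_no_rootP span']|[av vr]].
  have vr : (v < r)%N by apply: (inc' r); rewrite ffun_updE eqxx.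
  split=> //; have := span' r v a; rewrite !ffun_updE eqxx (negbTE ar) => /(_ erefl qa).
  by rewrite (ltnW (other_roots_lt a_mem)) andbT -leqNgt.
split.
  by apply/increasingP => c j; rewrite ffun_updE; case: eqP => [-> [<-] //|_]; apply: inc.
apply/spans_no_rootP => c j x; rewrite !ffun_updE.
have [//|xr] := eqVneq x r; have [_ [<-] qx|_] := eqVneq c r; last exact: span.
have := @last_other_root_max x; rewrite mem_other_roots xr qx => /(_ isT) xa.
by rewrite ltnNge (leq_trans xa av).
Qed.

Lemma sum_attach :
  \sum_(o | priority_forest (ffun_upd q r o)) gap_weight (tree_roots (ffun_upd q r o)) =
  gap_weight other_roots.
Proof.
rewrite big_option; have -> : ffun_upd q r None = q by rewrite -q_r ffun_upd_id.
rewrite q_prio tree_roots_detached.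
under eq_bigr => v _ do rewrite tree_roots_attached.
rewrite (eq_bigl _ _ priority_attach) sumr_const card_ord_itv; last exact: ltnW (ltn_ord r).
have := other_roots_lt last_other_root_mem; have := last_other_root_mem.
rewrite /last_other_root; case: other_roots => // x s _ /= xr; rewrite gap_weight_rcons.
have [k -> ->] : exists2 k, (r - last x s)%N = k.+1 & (r - last x s - 1)%N = k.
  by exists (r - last x s - 1)%N; rewrite // subn1 prednK // subn_gt0.
by rewrite mulrS -mulr_natl natz mulNr addrCA addNr addr0.
Qed.

Lemma sum_attach_pred :
  \sum_(o | priority_forest (ffun_upd q r o) && (o == Some (inord r.-1)))
    gap_weight (tree_roots (ffun_upd q r o)) = gap_weight other_roots.
Proof.
rewrite (big_pred1 (Some (inord r.-1))) ?tree_roots_attached // => o /=.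
apply/andP/eqP => [[_ /eqP //]|->]; split => //; rewrite priority_attach val_inord_pred.
by have := other_roots_lt last_other_root_mem; lia.
Qed.

End Fiber.

Lemma sum_attach_last :
  \sum_(q | priority_forest q && (edges P \subset edges q)) gap_weight (tree_roots q) =
  \sum_(q | priority_forest q && (edges (ffun_upd P r (Some (inord r.-1))) \subset edges q))
    gap_weight (tree_roots q).
Proof.
rewrite (sum_ffun_upd r None) [RHS](sum_ffun_upd r None); apply: eq_bigr => q /eqP q_r.
under eq_bigl => o do rewrite edges_subset_upd //.
under [RHS]eq_bigl => o do rewrite upd_edges_subset // edges_subset_upd // ffun_updE eqxx.
have [Pq|_] := boolP (edges P \subset edges q).
  2: by rewrite !big_pred0 // => o; rewrite andbF.
under eq_bigl => o do rewrite andbT.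
under [RHS]eq_bigl => o do rewrite andTb.
have [q_prio|nq] := boolP (priority_forest q); first by rewrite sum_attach // sum_attach_pred.
have detach_prio o : priority_forest (ffun_upd q r o) = false.
  apply: contraNF nq; case: o => [v|]; first exact: priority_detach.
  by rewrite -q_r ffun_upd_id.
by rewrite !big_pred0 // => o; rewrite detach_prio.
Qed.

End LastRoot.

Section PriorityLattice.
Variable n : nat.

Lemma Pi_le_refl : reflexive (@Pi_le n).
Proof. by case=> //= P; apply: subxx. Qed.

Lemma Pi_le_trans : transitive (@Pi_le n).
Proof. by case=> [Q|] [P|] [R|] //=; apply: subset_trans. Qed.

Lemma Pi_le_anti : antisymmetric (@Pi_le n).
Proof.
case=> [P|] [Q|] //= /andP[PQ QP]; congr Some; apply/val_inj/edges_inj.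
by apply/eqP; rewrite eqEsubset PQ QP.
Qed.

Lemma sum_prio (A : pred (forest n)) (F : forest n -> int) :
  \sum_(Q : prio n | A (val Q)) F (val Q) = \sum_(q | priority_forest q && A q) F q.
Proof.
rewrite [RHS](reindex_omap (val : prio n -> forest n) insub) => [|q /andP[q_prio _]].
  2: by rewrite insubT.
by apply: eq_bigl => Q; rewrite valK eqxx andbT (valP Q).
Qed.

Lemma extensions_of_tree (P q : forest n) : priority_forest P -> size (tree_roots P) = 1%N ->
  (priority_forest q && (edges P \subset edges q)) = (q == P).
Proof.
move=> P_prio sizeP; apply/andP/eqP => [[q_prio /edges_subsetP Pq]|->].
  2: by rewrite P_prio subxx.
apply/ffunP => c; case Pc: (P c) => [j|]; first exact: Pq.
have : c \in tree_roots P by rewrite mem_tree_roots Pc.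
move: sizeP (ord0_in_tree_roots (priority_forest_increasing P_prio)).
case: (tree_roots P) => [|x []] //= _; rewrite !inE => /eqP <- /eqP ->.
by rewrite increasing_root0 ?priority_forest_increasing.
Qed.

Lemma sum_extensions (P : forest n) : priority_forest P ->
  \sum_(q | priority_forest q && (edges P \subset edges q)) gap_weight (tree_roots q) = -1.
Proof.
move=> P_prio; move sizeP: (size (tree_roots P)) => [|k].
  by move/size0nil: sizeP (ord0_in_tree_roots (priority_forest_increasing P_prio)) => ->.
elim: k P P_prio sizeP => [|k IH] P P_prio sizeP.
  rewrite (big_pred1 P) => [|q]; last exact: extensions_of_tree.
  by rewrite /gap_weight sizeP big_ord0 mulr1 expr1.
have srt := sorted_tree_roots P; set r := last ord0 (tree_roots P).
have P_roots_le x : P x = None -> (x <= r)%N.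
  by move/eqP; rewrite -mem_tree_roots; apply: sorted_leq_last.
have P_r : P r = None.
  by apply/eqP; rewrite -mem_tree_roots /r -nth_last mem_nth ?sizeP.
have r_gt0 : (0 < r)%N.
  have := sorted_ltn_nth (fun _ _ _ => @ltn_trans _ _ _) ord0 srt 0 k.+1.
  rewrite /r -nth_last sizeP !inE => /(_ (ltn0Sn _) (ltnSn _) (ltn0Sn _)).
  exact: leq_ltn_trans (leq0n _).
rewrite (sum_attach_last P_prio P_r P_roots_le r_gt0); apply: IH.
  exact: priority_attach_last.
apply: succn_inj; rewrite tree_roots_attached -sizeP.
by rewrite (tree_roots_detached P_roots_le (subxx _) P_r) size_rcons.
Qed.

Lemma mu_top (P : prio n) : mu (Some P) None = gap_weight (tree_roots (val P)).
Proof.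
have [k] := ubnP (size (tree_roots (val P))); elim: k P => // k IH P sizeP.
have := sum_mobius_segment Pi_le_refl Pi_le_anti Pi_le_trans (x := Some P) (y := None).
rewrite big_option /= mobius_refl (bigD1 P) /= ?subxx // => /(_ isT isT).
move=> sum_mobius; have := sum_extensions (valP P).
rewrite -sum_prio (bigD1 P) ?subxx //=.
rewrite (eq_bigr (fun Q => mu (Some Q) None)) => [|Q /andP[PQ QP]]; last first.
  by rewrite IH // -ltnS (leq_trans _ sizeP) // ltnS size_tree_roots_lt // eq_sym.
rewrite (eq_bigl (fun Q => (edges (sval P) \subset edges (sval Q)) && true && (Q != P))) => [|Q].
  rewrite /mu => mu_S; set S := (\sum_(i | _) _) in sum_mobius mu_S *.
  by apply: (addIr S); rewrite mu_S -[RHS]add0r -sum_mobius [RHS]addrC addKr.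
by rewrite andbT.
Qed.

End PriorityLattice.

Theorem lemma5p13 (n : nat) (P : prio n) :
  (size (tree_roots (val P)) = 1%N -> mu (Some P) None = -1) /\
  ((1 < size (tree_roots (val P)))%N ->
     mu (Some P) None =
       (-1) ^+ corank (val P) *
       \prod_(k < (size (tree_roots (val P))).-1)
          ((tree_edges (val P) (nth ord0 (tree_roots (val P)) k))%:Z)).
Proof.
rewrite mu_top gap_weight_tree_roots ?(valP P) //; split=> // sizeP.
by rewrite corank_tree_roots sizeP big_ord0 mulr1 expr1.
Qed.
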